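(* Let $\mathcal F$ be a left-invariant ideal on a group $G$ that is $h$-invariant for an isomorphism $h:H\to K$ between torsion-free subgroups $K\subset H$ of $G$, and suppose there is $z\in H$ commuting with every element of $K$ with $z^2\notin K$. Let $\kappa$ be an infinite cardinal and suppose there are isomorphisms $h_n:H\to H_n$ ($n\in\kappa$) onto subgroups $H_n\subset H$ such that $\mathcal F$ is $h_n$-invariant for every $n$ and $H_nH_m\cap H_kH_l=\{e\}$ for all $n,m,k,l\in\kappa$ with $\{n,m\}\cap\{k,l\}=\emptyset$. If $\tau(\mathcal F)\cap\mathcal P_H\not\subset\mathcal F$, then $\tau^\alpha(\mathcal F)\ne\tau^{<\alpha}(\mathcal F)$ for all ordinals $\alpha<\kappa^+$.
   Context: For an isomorphism $g:H_1\to K_1$ between subgroups of $G$, $\mathcal F$ is $g$-invariant if for every $A\subset H_1$: $A\in\mathcal F$ iff $g(A)\in\mathcal F$. An ideal is closed under subsets and finite unions; left-invariant: $xF\in\mathcal F$ for $F\in\mathcal F$, $x\in G$. $\mathcal P_H$ is the family of subsets of $H$; $\kappa^+$ is the successor cardinal. $\tau(\mathcal F)=\{A\subset G: xA\cap yA\in\mathcal F$ for all distinct $x,y\in G\}$, $\tau^0(\mathcal F)=\mathcal F$, $\tau^{<\alpha}(\mathcal F)=\bigcup_{\beta<\alpha}\tau^\beta(\mathcal F)$, $\tau^\alpha(\mathcal F)=\tau(\tau^{<\alpha}(\mathcal F))$ for $\alpha>0$. *)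

Set Implicit Arguments.

Record Group := {
  carrier :> Type;
  gmul : carrier -> carrier -> carrier;
  ginv : carrier -> carrier;
  gone : carrier;
  gmul_assoc : forall x y z, gmul x (gmul y z) = gmul (gmul x y) z;
  gmul_1l : forall x, gmul gone x = x;
  gmul_1r : forall x, gmul x gone = x;
  gmul_Vl : forall x, gmul (ginv x) x = gone;
  gmul_Vr : forall x, gmul x (ginv x) = gone
}.

Arguments gmul {_} _ _.
Arguments ginv {_} _.

Section Defs.
Variable G : Group.

Definition gset := G -> Prop.
Definition family := gset -> Prop.

Definition subset (A B : gset) : Prop := forall g, A g -> B g.
Definition inter (A B : gset) : gset := fun g => A g /\ B g.
Definition union (A B : gset) : gset := fun g => A g \/ B g.

Definition ltrans (x : G) (A : gset) : gset := fun g => A (gmul (ginv x) g).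

Definition image (f : G -> G) (A : gset) : gset :=
  fun g => exists a, A a /\ f a = g.

Definition prodset (A B : gset) : gset :=
  fun g => exists a b, A a /\ B b /\ gmul a b = g.

Fixpoint gpow (x : G) (n : nat) : G :=
  match n with O => gone G | S k => gmul x (gpow x k) end.

Definition subgroup (H : gset) : Prop :=
  H (gone G) /\ (forall x y, H x -> H y -> H (gmul x y)) /\
  (forall x, H x -> H (ginv x)).

Definition torsion_free (H : gset) : Prop :=
  forall x, H x -> x <> gone G -> forall n, gpow x (S n) <> gone G.

Definition subgroup_iso (f : G -> G) (H K : gset) : Prop :=
  (forall a, H a -> K (f a)) /\
  (forall a b, H a -> H b -> f a = f b -> a = b) /\
  (forall c, K c -> exists a, H a /\ f a = c) /\
  (forall a b, H a -> H b -> f (gmul a b) = gmul (f a) (f b)).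

Definition invariant_under (F : family) (f : G -> G) (H : gset) : Prop :=
  forall A, subset A H -> (F A <-> F (image f A)).

Definition ideal (F : family) : Prop :=
  (forall A B, F A -> subset B A -> F B) /\
  (forall A B, F A -> F B -> F (union A B)).

Definition left_invariant (F : family) : Prop :=
  forall A x, F A -> F (ltrans x A).

Definition tau (F : family) : family :=
  fun A => forall x y : G, x <> y -> F (inter (ltrans x A) (ltrans y A)).

(* Transfinite iteration of tau indexed by a well-ordered type (W, lt):
   the element w stands for the ordinal = order type of {b | lt b w}.
   tauIter w = F if w is the least element (ordinal 0),
   tauIter w = tau (tauLt w) otherwise, where tauLt w = ⋃_{b<w} tauIter b. *)
Definition tauIter (F : family) (W : Type) (lt : W -> W -> Prop)
  (wf : well_founded lt) : W -> family :=
  Fix wf (fun _ => family)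
    (fun w rec => fun A =>
       ((forall b, ~ lt b w) /\ F A) \/
       ((exists b, lt b w) /\
        tau (fun B => exists b (h : lt b w), rec b h B) A)).

Definition tauLt (F : family) (W : Type) (lt : W -> W -> Prop)
  (wf : well_founded lt) (w : W) : family :=
  fun A => exists b, lt b w /\ tauIter F wf b A.

End Defs.

Definition strict_total_order (W : Type) (lt : W -> W -> Prop) : Prop :=
  (forall a b c, lt a b -> lt b c -> lt a c) /\
  (forall a b, lt a b \/ a = b \/ lt b a).

From Stdlib Require Import Classical ClassicalEpsilon FunctionalExtensionality List Lia Arith.
From Stdlib Require FinFun.
Set Implicit Arguments. Unset Strict Implicit.

(* By well-founded induction every stage [w] gets a set [B ⊆ H ∖ {1}] with
   [B ∈ τ^{w+1} ∖ τ^w].  All iterates are down-closed and left-invariant, and they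
   inherit the [h]- and [h_n]-invariance of [F].
   - If [w] has an immediate predecessor [v], then [B_v ∈ τ^w ∖ τ^{<w}].
   - If [w] is a limit, [U = ⋃_{b<w} h_{f b}(B_b)] lies in [τ^w ∖ τ^{<w}]: for [u] in
     some [H_{f b}] the set [U ∩ uU] lies in the [h_{f b}]-image of [B_b ∩ vB_b], while for
     the other [u] the disjointness of the products [H_n H_m] leaves at most three
     points in [U ∩ uU], and finite subsets of the torsion-free [H] lie low in the
     hierarchy.
   - From [C ∈ τ^w ∖ τ^{<w}] one gets [h(C) ∪ z h(C) ∈ τ^{w+1} ∖ τ^w], because the
     cosets [K], [zK], [z^-1 K] are distinct and [z] centralises [K]. *)

Section GroupFacts.
Variable G : Group.
Implicit Types a b c g u : G.

Lemma gmul_cancel_l a b c : gmul a b = gmul a c -> b = c.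
Proof.
  intro E. rewrite <- (gmul_1l G b), <- (gmul_1l G c), <- (gmul_Vl G a),
    <- !gmul_assoc, E. reflexivity.
Qed.

Lemma gmul_cancel_r a b c : gmul b a = gmul c a -> b = c.
Proof.
  intro E. rewrite <- (gmul_1r G b), <- (gmul_1r G c), <- (gmul_Vr G a),
    !gmul_assoc, E. reflexivity.
Qed.

Lemma ginvK a : ginv (ginv a) = a.
Proof. apply (gmul_cancel_l (a := ginv a)). rewrite gmul_Vr, gmul_Vl. reflexivity. Qed.

Lemma ginv1 : ginv (gone G) = gone G.
Proof. rewrite <- (gmul_1r G (ginv (gone G))). apply gmul_Vl. Qed.

Lemma ginvM a b : ginv (gmul a b) = gmul (ginv b) (ginv a).
Proof.
  apply (gmul_cancel_l (a := gmul a b)). rewrite gmul_Vr, gmul_assoc,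
    <- (gmul_assoc G a b), gmul_Vr, gmul_1r, gmul_Vr. reflexivity.
Qed.

Lemma gmulKV a b : gmul a (gmul (ginv a) b) = b.
Proof. rewrite gmul_assoc, gmul_Vr, gmul_1l. reflexivity. Qed.

Lemma gmulVK a b : gmul (ginv a) (gmul a b) = b.
Proof. rewrite gmul_assoc, gmul_Vl, gmul_1l. reflexivity. Qed.

Lemma ginv_eq1 a : ginv a = gone G -> a = gone G.
Proof. intro E. rewrite <- (ginvK a), E. apply ginv1. Qed.

Lemma ldiv_eq1 a b : gmul (ginv a) b = gone G -> a = b.
Proof. intro E. rewrite <- (gmulKV a b), E, gmul_1r. reflexivity. Qed.

Lemma gmul_ldivV u g : gmul g (ginv (gmul (ginv u) g)) = u.
Proof. rewrite ginvM, ginvK, gmulKV. reflexivity. Qed.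

Lemma gpowD x m n : gpow G x (m + n) = gmul (gpow G x m) (gpow G x n).
Proof.
  induction m as [|m IHm]; simpl.
  - rewrite gmul_1l. reflexivity.
  - rewrite IHm, gmul_assoc. reflexivity.
Qed.

End GroupFacts.

Ltac gsimpl := repeat progress rewrite ?ginvM, ?ginvK, ?ginv1, <- ?gmul_assoc,
  ?gmulKV, ?gmulVK, ?gmul_Vr, ?gmul_Vl, ?gmul_1l, ?gmul_1r.

Section Subgroups.
Variables (G : Group) (H : gset G).
Hypothesis sH : subgroup H.

Lemma subgroup1 : H (gone G).
Proof. apply sH. Qed.

Lemma subgroupM a b : H a -> H b -> H (gmul a b).
Proof. apply sH. Qed.

Lemma subgroupV a : H a -> H (ginv a).
Proof. apply sH. Qed.

Lemma subgroupVr a : H (ginv a) -> H a.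
Proof. intro Ha. rewrite <- (ginvK a). apply subgroupV, Ha. Qed.

Lemma subgroup_of_ldiv u g : H g -> H (gmul (ginv u) g) -> H u.
Proof.
  intros Hg Hug. rewrite <- (gmul_ldivV u g). apply subgroupM, subgroupV; assumption.
Qed.

End Subgroups.

Section TorsionFree.
Variables (G : Group) (H : gset G).
Hypothesis tH : torsion_free H.

Lemma torsion_free_gpow_inj x : H x -> x <> gone G ->
  forall i j, gpow G x i = gpow G x j -> i = j.
Proof.
  intros Hx x1.
  assert (Hlt : forall i d, gpow G x i <> gpow G x (i + S d)).
  { intros i d E. rewrite gpowD, <- (gmul_1r G (gpow G x i)) in E at 1.
    apply gmul_cancel_l in E. exact (tH Hx x1 (eq_sym E)). }
  intros i j E. destruct (Nat.lt_trichotomy i j) as [ij|[ij|ij]]; [|assumption|].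
  - exfalso. apply (Hlt i (j - i - 1)). rewrite E. f_equal. lia.
  - exfalso. apply (Hlt j (i - j - 1)). rewrite <- E. f_equal. lia.
Qed.

(* Otherwise the pairwise distinct points [x^k q0] would all lie in [l]. *)
Lemma torsion_free_no_stable_list (x : G) (l : list G) : H x -> x <> gone G ->
  (forall q, In q l -> In (gmul x q) l) -> l = nil.
Proof.
  intros Hx x1 stable. destruct l as [|q0 l']; [reflexivity|exfalso].
  set (orbit k := gmul (gpow G x k) q0).
  assert (orbit_in : forall k, In (orbit k) (q0 :: l')).
  { induction k as [|k IHk]; unfold orbit in *; simpl.
    - rewrite gmul_1l. left. reflexivity.
    - rewrite <- gmul_assoc. apply stable, IHk. }
  assert (orbit_inj : FinFun.Injective orbit).
  { intros i j E. apply gmul_cancel_r in E. exact (torsion_free_gpow_inj Hx x1 E). }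
  assert (Hlen : length (map orbit (seq 0 (S (length (q0 :: l'))))) <= length (q0 :: l')).
  { apply NoDup_incl_length.
    - exact (FinFun.Injective_map_NoDup orbit_inj (seq_NoDup _ 0)).
    - intros g Hg. apply in_map_iff in Hg. destruct Hg as [k [<- _]]. apply orbit_in. }
  rewrite length_map, length_seq in Hlen. lia.
Qed.

End TorsionFree.

Section Isomorphisms.
Variables (G : Group) (f : G -> G) (H K : gset G).
Hypotheses (sH : subgroup H) (iso : subgroup_iso f H K).

Lemma iso_mem a : H a -> K (f a).
Proof. apply iso. Qed.

Lemma iso_inj a b : H a -> H b -> f a = f b -> a = b.
Proof. apply iso. Qed.

Lemma iso_onto c : K c -> exists a, H a /\ f a = c.
Proof. apply iso. Qed.

Lemma isoM a b : H a -> H b -> f (gmul a b) = gmul (f a) (f b).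
Proof. apply iso. Qed.

Lemma iso1 : f (gone G) = gone G.
Proof.
  assert (E := isoM (subgroup1 sH) (subgroup1 sH)). rewrite gmul_1l in E.
  symmetry. apply (gmul_cancel_l (a := f (gone G))). rewrite gmul_1r. exact E.
Qed.

Lemma isoV a : H a -> f (ginv a) = ginv (f a).
Proof.
  intro Ha. assert (E := isoM Ha (subgroupV sH Ha)). rewrite gmul_Vr, iso1 in E.
  apply (gmul_cancel_l (a := f a)). rewrite gmul_Vr. symmetry. exact E.
Qed.

Lemma iso_eq1 a : H a -> f a = gone G -> a = gone G.
Proof. intros Ha E. apply iso_inj; [exact Ha|apply (subgroup1 sH)|]. rewrite iso1. exact E. Qed.

Lemma iso_image_inter_ltrans (A : gset G) u g : subset A H -> H u ->
  image f (inter A (ltrans u A)) g <-> inter (image f A) (ltrans (f u) (image f A)) g.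
Proof.
  intros AH Hu. unfold ltrans. split.
  - intros [a [[Aa Aua] <-]]. split; [exists a; auto|].
    exists (gmul (ginv u) a). split; [exact Aua|].
    rewrite isoM, isoV; [reflexivity|exact Hu|apply (subgroupV sH Hu)|exact (AH a Aa)].
  - intros [[a [Aa <-]] [b [Ab Eb]]]. exists a. split; [split; [exact Aa|]|reflexivity].
    enough (gmul u b = a) as <- by (gsimpl; exact Ab).
    assert (Hb := AH b Ab). apply iso_inj; [apply (subgroupM sH Hu Hb)|exact (AH a Aa)|].
    rewrite isoM, Eb by assumption. apply gmulKV.
Qed.

End Isomorphisms.

Section Tau.
Variable G : Group.
Implicit Types (P Q : family G) (A B : gset G).

Definition dclosed P := forall A B, P A -> subset B A -> P B.

Definition emptyset : gset G := fun _ => False.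

Definition lower_invariant P := dclosed P /\ left_invariant P /\ P emptyset.

Lemma lower_invariant_eqv P Q : (forall A, Q A <-> P A) -> lower_invariant P -> lower_invariant Q.
Proof.
  intros E [dP [lP eP]]. split; [|split].
  - intros A B QA BA. apply E. apply (dP A); [apply E|]; assumption.
  - intros A x QA. apply E, lP, E, QA.
  - apply E, eP.
Qed.

Lemma lower_invariant_union (I : Type) (R : I -> Prop) (Ps : I -> family G) :
  (exists i, R i) -> (forall i, R i -> lower_invariant (Ps i)) ->
  lower_invariant (fun A => exists i, R i /\ Ps i A).
Proof.
  intros [i0 Ri0] low. split; [|split].
  - intros A B [i [Ri PA]] BA. exists i. split; [exact Ri|]. apply (low i Ri) with A; assumption.
  - intros A x [i [Ri PA]]. exists i. split; [exact Ri|]. apply (low i Ri), PA.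
  - exists i0. split; [exact Ri0|]. apply (low i0 Ri0).
Qed.

Lemma ltrans1 A g : ltrans (gone G) A g <-> A g.
Proof. unfold ltrans. rewrite ginv1, gmul_1l. tauto. Qed.

(* Translating by [x^-1] reduces [xA ∩ yA] to [A ∩ (x^-1 y) A]. *)
Lemma tauE P A : dclosed P -> left_invariant P ->
  (tau P A <-> forall u, u <> gone G -> P (inter A (ltrans u A))).
Proof.
  intros dP lP. split.
  - intros T u u1. apply (dP _ _ (T (gone G) u (fun E => u1 (eq_sym E)))).
    intros g [Ag Aug]. split; [apply ltrans1|]; assumption.
  - intros T x y xy.
    assert (u1 : gmul (ginv x) y <> gone G) by (intros E; apply xy, ldiv_eq1, E).
    apply (dP _ _ (lP _ x (T _ u1))).
    intros g [Axg Ayg]. unfold ltrans, inter in *. split; [exact Axg|]. gsimpl. exact Ayg.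
Qed.

Lemma tau_mono P Q A : (forall B, P B -> Q B) -> tau P A -> tau Q A.
Proof. intros PQ T x y xy. apply PQ, T, xy. Qed.

Lemma tau_eqv P Q A : (forall B, P B <-> Q B) -> (tau P A <-> tau Q A).
Proof. intros E. split; apply tau_mono; apply E. Qed.

Lemma tau_incr P A : dclosed P -> left_invariant P -> P A -> tau P A.
Proof. intros dP lP PA x y _. apply (dP _ _ (lP _ x PA)). intros g [Ag _]. exact Ag. Qed.

Lemma tau_lower_invariant P : lower_invariant P -> lower_invariant (tau P).
Proof.
  intros [dP [lP eP]]. split; [|split].
  - intros A B T BA x y xy. apply (dP _ _ (T x y xy)). intros g [Ag Ag']. split; apply BA; assumption.
  - intros A c T x y xy.
    assert (xcyc : gmul x c <> gmul y c) by (intro E; apply xy, gmul_cancel_r with c, E).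
    apply (dP _ _ (T _ _ xcyc)). intros g [Ag Ag']. unfold ltrans in *.
    split; rewrite ginvM, <- gmul_assoc; assumption.
  - apply tau_incr; assumption.
Qed.

Lemma tau_double_sub P (C : gset G) z : dclosed P -> left_invariant P -> z <> gone G ->
  tau P (union C (ltrans z C)) -> P C.
Proof.
  intros dP lP z1 T. rewrite tauE in T by assumption.
  assert (zV1 : ginv z <> gone G) by (intro E; apply z1, ginv_eq1, E).
  apply (dP _ _ (T _ zV1)). intros g Cg. split; [left; exact Cg|].
  right. unfold ltrans. gsimpl. exact Cg.
Qed.

Section Invariance.
Variables (f : G -> G) (H K : gset G).
Hypotheses (sH : subgroup H) (iso : subgroup_iso f H K).

Lemma tau_invariant P : lower_invariant P -> invariant_under P f H -> invariant_under (tau P) f H.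
Proof.
  intros [dP [lP eP]] invP A AH.
  assert (AuH : forall u, subset (inter A (ltrans u A)) H) by (intros u g [Ag _]; auto).
  rewrite !tauE by assumption. split.
  - intros T v v1. destruct (classic (exists u, H u /\ f u = v)) as [[u [Hu <-]]|notv].
    + assert (u1 : u <> gone G) by (intro E; apply v1; subst; apply (iso1 sH iso)).
      apply (dP _ _ (proj1 (invP _ (AuH u)) (T u u1))).
      intros g Hg. apply (iso_image_inter_ltrans sH iso); assumption.
    + apply (dP _ _ eP). intros g [[a [Aa <-]] [b [Ab Eb]]]. apply notv.
      assert (Ha := AH a Aa). assert (Hb := AH b Ab). assert (HbV := subgroupV sH Hb).
      exists (gmul a (ginv b)). split; [apply (subgroupM sH); assumption|].
      rewrite (isoM iso), (isoV sH iso), Eb by assumption. apply gmul_ldivV.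
  - intros T u u1. destruct (classic (H u)) as [Hu|notu].
    + assert (fu1 : f u <> gone G) by (intro E; apply u1, (iso_eq1 sH iso Hu E)).
      apply (invP _ (AuH u)), (dP _ _ (T _ fu1)).
      intros g Hg. apply (iso_image_inter_ltrans sH iso); assumption.
    + apply (dP _ _ eP). intros g [Ag Aug]. apply notu, (subgroup_of_ldiv sH (g := g)); auto.
Qed.

End Invariance.

Lemma tau_witness_avoiding_one (P : family G) (H A : gset G) u :
  lower_invariant P -> subgroup H -> H u -> u <> gone G ->
  subset A H -> tau P A -> ~ P A ->
  exists B, subset B H /\ ~ B (gone G) /\ tau P B /\ ~ P B.
Proof.
  intros lowP sH Hu u1 AH TA nA. pose proof lowP as [dP [lP _]].
  destruct (classic (exists a, H a /\ ~ A a)) as [[a [Ha nAa]]|HA].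
  - exists (ltrans (ginv a) A). unfold ltrans. rewrite ginvK.
    split; [|split; [|split]].
    + intros g Aag. rewrite <- (gmulVK a g). apply (subgroupM sH), AH, Aag. apply (subgroupV sH Ha).
    + rewrite gmul_1r. exact nAa.
    + destruct (tau_lower_invariant lowP) as [_ [lT _]].
      assert (TaA := lT A (ginv a) TA). unfold ltrans in TaA. rewrite ginvK in TaA. exact TaA.
    + intro PB. apply nA, (dP _ _ (lP _ a PB)). intros g Ag. unfold ltrans. rewrite gmulKV. exact Ag.
  - exfalso. apply nA. rewrite tauE in TA by assumption. apply (dP _ _ (TA u u1)).
    intros g Ag. split; [exact Ag|]. unfold ltrans. apply NNPP. intro nAug. apply HA.
    exists (gmul (ginv u) g). split; [|exact nAug].
    apply (subgroupM sH); [apply (subgroupV sH Hu)|exact (AH g Ag)].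
Qed.

End Tau.

Section Doubling.
Variables (G : Group) (K : gset G) (z : G).
Hypotheses (sK : subgroup K) (zK : forall k, K k -> gmul z k = gmul k z) (zzK : ~ K (gmul z z)).

Lemma notK_z : ~ K z.
Proof. intro Kz. apply zzK, (subgroupM sK); assumption. Qed.

Lemma z_neq1 : z <> gone G.
Proof. intro E. apply notK_z. rewrite E. apply (subgroup1 sK). Qed.

Lemma zV_commute k : K k -> gmul (ginv z) k = gmul k (ginv z).
Proof.
  intro Kk. apply (gmul_cancel_l (a := z)). rewrite gmulKV, gmul_assoc, zK by exact Kk.
  gsimpl. reflexivity.
Qed.

Lemma K_of_K_conjz u : K (gmul (ginv z) (gmul u z)) -> K u.
Proof.
  intro Kk. enough (E : gmul u z = gmul (gmul (ginv z) (gmul u z)) z).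
  { apply gmul_cancel_r in E. rewrite E. exact Kk. }
  rewrite <- (zK Kk). gsimpl. reflexivity.
Qed.

Lemma commute_z_of_K_zVmul u : K (gmul (ginv z) u) -> gmul z u = gmul u z.
Proof.
  intro Kk. assert (E := zK Kk). rewrite gmulKV in E.
  rewrite E at 1. gsimpl. reflexivity.
Qed.

Lemma notK_mulz_of_K u : K u -> ~ K (gmul u z).
Proof.
  intros Ku Kuz. apply notK_z. rewrite <- (gmulVK u z).
  apply (subgroupM sK), Kuz. apply (subgroupV sK), Ku.
Qed.

Lemma notK_zVmul_of_K u : K u -> ~ K (gmul (ginv z) u).
Proof.
  intros Ku Kzu. apply notK_z, (subgroupVr sK).
  rewrite <- (gmul_1r G (ginv z)), <- (gmul_Vr G u), gmul_assoc.
  apply (subgroupM sK), (subgroupV sK); assumption.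
Qed.

Lemma notK_zVmul_of_K_mulz u : K (gmul u z) -> ~ K (gmul (ginv z) u).
Proof.
  intros Kuz Kzu. apply zzK.
  replace (gmul z z) with (gmul (gmul u z) (ginv (gmul (ginv z) u))).
  - apply (subgroupM sK), (subgroupV sK); assumption.
  - rewrite ginvM, ginvK, <- commute_z_of_K_zVmul by exact Kzu. gsimpl. reflexivity.
Qed.

Variable C : gset G.
Hypothesis CK : subset C K.

Let D := union C (ltrans z C).

(* A point of [D ∩ uD] lies in [C] or [zC], and so does its [u]-preimage; which of
   the four combinations occurs is dictated by the coset of [u] modulo [K]. *)
Lemma double_inter_cases u g : inter D (ltrans u D) g ->
  (C g /\ C (gmul (ginv u) g) /\ K u) \/
  (C g /\ C (gmul (ginv z) (gmul (ginv u) g)) /\ K (gmul u z)) \/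
  (C (gmul (ginv z) g) /\ C (gmul (ginv u) g) /\ K (gmul (ginv z) u)) \/
  (C (gmul (ginv z) g) /\ C (gmul (ginv z) (gmul (ginv u) g)) /\ K u).
Proof.
  unfold D, inter, union, ltrans.
  assert (div : forall a b, C a -> C b -> K (gmul a (ginv b))).
  { intros a b Ca Cb. apply (subgroupM sK), (subgroupV sK); apply CK; assumption. }
  intros [[Cg|Cg] [Cug|Cug]].
  - left. repeat split; [assumption..|]. rewrite <- (gmul_ldivV u g). apply div; assumption.
  - right; left. repeat split; [assumption..|].
    replace (gmul u z) with (gmul g (ginv (gmul (ginv z) (gmul (ginv u) g)))) by (gsimpl; reflexivity).
    apply div; assumption.
  - right; right; left. repeat split; [assumption..|].
    replace (gmul (ginv z) u) with (gmul (gmul (ginv z) g) (ginv (gmul (ginv u) g)))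
      by (gsimpl; reflexivity).
    apply div; assumption.
  - right; right; right. repeat split; [assumption..|]. apply K_of_K_conjz.
    replace (gmul (ginv z) (gmul u z))
      with (gmul (gmul (ginv z) g) (ginv (gmul (ginv z) (gmul (ginv u) g)))) by (gsimpl; reflexivity).
    apply div; assumption.
Qed.

Lemma double_inter_sub_of_K u : K u ->
  subset (inter D (ltrans u D)) (union (inter C (ltrans u C)) (ltrans z (inter C (ltrans u C)))).
Proof.
  intros Ku g Dg. unfold union, inter, ltrans.
  destruct (double_inter_cases Dg) as [[Cg [Cug _]]|[[_ [_ Kuz]]|[[_ [_ Kzu]]|[Czg [Czug _]]]]].
  - left. split; assumption.
  - exfalso. exact (notK_mulz_of_K Ku Kuz).
  - exfalso. exact (notK_zVmul_of_K Ku Kzu).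
  - right. split; [exact Czg|].
    rewrite gmul_assoc, <- zV_commute, <- gmul_assoc by exact (subgroupV sK Ku). exact Czug.
Qed.

Lemma double_inter_sub_of_K_mulz u : K (gmul u z) -> subset (inter D (ltrans u D)) C.
Proof.
  intros Kuz g Dg.
  destruct (double_inter_cases Dg) as [[Cg _]|[[Cg _]|[[_ [_ Kzu]]|[_ [_ Ku]]]]].
  - exact Cg.
  - exact Cg.
  - exfalso. exact (notK_zVmul_of_K_mulz Kuz Kzu).
  - exfalso. exact (notK_mulz_of_K Ku Kuz).
Qed.

Lemma double_inter_sub_of_notK u : ~ K u -> ~ K (gmul u z) -> subset (inter D (ltrans u D)) (ltrans z C).
Proof.
  intros nKu nKuz g Dg.
  destruct (double_inter_cases Dg) as [[_ [_ Ku]]|[[_ [_ Kuz]]|[[Czg _]|[_ [_ Ku]]]]].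
  - contradiction.
  - contradiction.
  - exact Czg.
  - contradiction.
Qed.

End Doubling.

Fixpoint has_depth (W : Type) (lt : W -> W -> Prop) (n : nat) (w : W) : Prop :=
  match n with O => True | S n => exists b, lt b w /\ has_depth lt n b end.

Definition at_most (T : Type) (n : nat) (E : T -> Prop) : Prop :=
  exists l : list T, length l <= n /\ forall x, E x -> In x l.

Lemma at_most_three (T : Type) (E : T -> Prop) :
  (forall a b c d, E a -> E b -> E c -> E d ->
     a <> b -> a <> c -> a <> d -> b <> c -> b <> d -> c <> d -> False) ->
  at_most 3 E.
Proof.
  intros no4.
  destruct (classic (exists a, E a)) as [[a Ea]|none].
  2: { exists nil. split; [simpl; lia|]. intros x Ex. apply none. exists x. exact Ex. }
  destruct (classic (exists b, E b /\ b <> a)) as [[b [Eb ba]]|only_a].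
  2: { exists (a :: nil). split; [simpl; lia|]. intros x Ex. left.
       apply NNPP. intro xa. apply only_a. exists x. split; [exact Ex|].
       intro E'. apply xa. symmetry. exact E'. }
  destruct (classic (exists c, E c /\ c <> a /\ c <> b)) as [[c [Ec [ca cb]]]|only_ab].
  2: { exists (a :: b :: nil). split; [simpl; lia|]. intros x Ex. simpl.
       destruct (classic (a = x)); [tauto|]. destruct (classic (b = x)); [tauto|].
       exfalso. apply only_ab. exists x. auto. }
  exists (a :: b :: c :: nil). split; [simpl; lia|]. intros x Ex. simpl.
  destruct (classic (a = x)); [tauto|]. destruct (classic (b = x)); [tauto|].
  destruct (classic (c = x)); [tauto|].
  exfalso. apply (no4 a b c x); auto.
Qed.

Lemma limit_has_depth (W : Type) (lt : W -> W -> Prop) w n : (exists b, lt b w) ->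
  (forall b, lt b w -> exists c, lt b c /\ lt c w) -> exists c, lt c w /\ has_depth lt n c.
Proof.
  intros [b0 hb0] lim. induction n as [|n [c [hc depth]]].
  - exists b0. split; [exact hb0|exact I].
  - destruct (lim c hc) as [c' [cc' hc']]. exists c'. split; [exact hc'|]. exists c. split; assumption.
Qed.

Section DisjointProducts.
Variables (G : Group) (Kap : Type) (Hs : Kap -> gset G).
Hypothesis sHs : forall n, subgroup (Hs n).
Hypothesis HsD : forall n m k l, n <> k -> n <> l -> m <> k -> m <> l ->
  forall g, prodset (Hs n) (Hs m) g -> prodset (Hs k) (Hs l) g -> g = gone G.

Lemma prodset_mem n m a b : Hs n a -> Hs m b -> prodset (Hs n) (Hs m) (gmul a b).
Proof. intros Ha Hb. exists a, b. auto. Qed.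

Lemma Hs_disjoint n k g : n <> k -> Hs n g -> Hs k g -> g = gone G.
Proof.
  intros nk Hn Hk. apply (HsD nk nk nk nk); rewrite <- (gmul_1r G g);
    apply prodset_mem; [assumption|apply (subgroup1 (sHs _))|assumption|apply (subgroup1 (sHs _))].
Qed.

Lemma Hs_same_index u g n i j : u <> gone G -> Hs n u ->
  Hs i g -> g <> gone G -> Hs j (gmul (ginv u) g) -> gmul (ginv u) g <> gone G -> i = n /\ j = n.
Proof.
  intros u1 Hnu Hig g1 Hjug ug1.
  assert (jn : j = n -> i = n).
  { intros -> . apply NNPP. intro ni. apply g1, (Hs_disjoint ni Hig).
    rewrite <- (gmulKV u g). apply (subgroupM (sHs n)); assumption. }
  assert (i_n : i = n).
  { destruct (classic (j = n)) as [e|nj]; [exact (jn e)|].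
    apply NNPP. intro ni. apply u1, (HsD ni ni nj nj).
    - rewrite <- (gmul_ldivV u g). apply prodset_mem; [exact Hig|]. apply (subgroupV (sHs j)), Hjug.
    - rewrite <- (gmul_1r G u). apply prodset_mem; [exact Hnu|apply (subgroup1 (sHs n))]. }
  split; [exact i_n|]. apply NNPP. intro nj. apply ug1, (Hs_disjoint nj Hjug).
  subst i. apply (subgroupM (sHs n)); [apply (subgroupV (sHs n))|]; assumption.
Qed.

Definition label u g n m := Hs n g /\ Hs m (gmul (ginv u) g) /\ ~ Hs n u /\ ~ Hs m u.

Lemma label_neq u g n m : label u g n m -> n <> m.
Proof.
  intros [Hg [Hug [nu _]]] <-. apply nu. rewrite <- (gmul_ldivV u g).
  apply (subgroupM (sHs n)), (subgroupV (sHs n)); assumption.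
Qed.

Lemma label_first_inj u g g' n m m' : label u g n m -> label u g' n m' -> g = g'.
Proof.
  intros L L'. pose proof (label_neq L) as nm. pose proof (label_neq L') as nm'.
  destruct L as [Hg [Hug _]]. destruct L' as [Hg' [Hug' _]].
  apply ldiv_eq1, (HsD (n := m) (m := m') (k := n) (l := n)); auto.
  - replace (gmul (ginv g) g') with (gmul (ginv (gmul (ginv u) g)) (gmul (ginv u) g'))
      by (gsimpl; reflexivity).
    apply prodset_mem; [apply (subgroupV (sHs m))|]; assumption.
  - apply prodset_mem; [apply (subgroupV (sHs n))|]; assumption.
Qed.

Lemma label_second_inj u g g' n n' m : label u g n m -> label u g' n' m -> g = g'.
Proof.
  intros L L'. pose proof (label_neq L) as nm. pose proof (label_neq L') as nm'.
  destruct L as [Hg [Hug _]]. destruct L' as [Hg' [Hug' _]].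
  apply ldiv_eq1, (HsD (n := n) (m := n') (k := m) (l := m)); auto.
  - apply prodset_mem; [apply (subgroupV (sHs n))|]; assumption.
  - replace (gmul (ginv g) g') with (gmul (ginv (gmul (ginv u) g)) (gmul (ginv u) g'))
      by (gsimpl; reflexivity).
    apply prodset_mem; [apply (subgroupV (sHs m))|]; assumption.
Qed.

Lemma label_cross u g g' n m n' m' : u <> gone G -> label u g n m -> label u g' n' m' ->
  n = n' \/ n = m' \/ m = n' \/ m = m'.
Proof.
  intros u1 [Hg [Hug _]] [Hg' [Hug' _]]. apply NNPP. intro disj. apply u1.
  apply (HsD (n := n) (m := m) (k := n') (l := m')); [tauto..| |].
  - rewrite <- (gmul_ldivV u g). apply prodset_mem; [exact Hg|]. apply (subgroupV (sHs m)), Hug.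
  - rewrite <- (gmul_ldivV u g'). apply prodset_mem; [exact Hg'|]. apply (subgroupV (sHs m')), Hug'.
Qed.

(* Two labelled points with a common label coordinate in the same position coincide,
   and any two labels meet; so the labels of points other than a fixed point [a]
   all meet [a]'s label crosswise, and at most two more points fit. *)
Lemma labelled_at_most_three u (E : gset G) : u <> gone G ->
  (forall g, E g -> exists n m, label u g n m) -> at_most 3 E.
Proof.
  intros u1 lab. apply at_most_three.
  intros a b c d Ea Eb Ec Ed ab ac ad bc bd cd.
  destruct (lab a Ea) as [n1 [m1 La]].
  assert (crosswise : forall x, E x -> x <> a -> exists n m, label u x n m /\ (n = m1 \/ m = n1)).
  { intros x Ex xa. destruct (lab x Ex) as [n [m Lx]]. exists n, m. split; [exact Lx|].
    destruct (label_cross u1 La Lx) as [e|[e|[e|e]]].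
    - rewrite <- e in Lx. exfalso. exact (xa (label_first_inj Lx La)).
    - right. symmetry. exact e.
    - left. symmetry. exact e.
    - rewrite <- e in Lx. exfalso. exact (xa (label_second_inj Lx La)). }
  destruct (crosswise b Eb (fun e => ab (eq_sym e))) as [n2 [m2 [Lb [e2|e2]]]];
  destruct (crosswise c Ec (fun e => ac (eq_sym e))) as [n3 [m3 [Lc [e3|e3]]]];
  destruct (crosswise d Ed (fun e => ad (eq_sym e))) as [n4 [m4 [Ld [e4|e4]]]]; subst.
  all: first [ apply bc; eapply label_first_inj; eassumption
             | apply bd; eapply label_first_inj; eassumption
             | apply cd; eapply label_first_inj; eassumption
             | apply bc; eapply label_second_inj; eassumption
             | apply bd; eapply label_second_inj; eassumption
             | apply cd; eapply label_second_inj; eassumption ].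
Qed.

End DisjointProducts.

Section Transfinite.
Variables (G : Group) (F : family G) (W : Type) (lt : W -> W -> Prop) (wf : well_founded lt).
Local Notation tI := (tauIter F wf).
Local Notation tL := (tauLt F wf).

Lemma tauIterE w A :
  tI w A <-> ((forall b, ~ lt b w) /\ F A) \/ ((exists b, lt b w) /\ tau (tL w) A).
Proof.
  unfold tauIter at 1. rewrite Fix_eq.
  - rewrite (tau_eqv A (Q := tL w)); [reflexivity|].
    intro B. unfold tauLt.
    split; intros [b [hb Hb]]; [exists b; split; assumption|exists b, hb; exact Hb].
  - intros x f g fg. replace g with f; [reflexivity|].
    extensionality y. extensionality hy. apply fg.
Qed.

Lemma tauIter0 w : (forall b, ~ lt b w) -> forall A, tI w A <-> F A.
Proof. intros min A. rewrite tauIterE. firstorder. Qed.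

Lemma tauIter_pos w : (exists b, lt b w) -> forall A, tI w A <-> tau (tL w) A.
Proof. intros [b hb] A. rewrite tauIterE. firstorder. Qed.

Lemma no_lt_of_not_pos w : ~ (exists b, lt b w) -> forall b, ~ lt b w.
Proof. intros min b hb. apply min. exists b. exact hb. Qed.

Hypothesis lowF : lower_invariant F.

Lemma tauIter_lower_invariant w : lower_invariant (tI w).
Proof.
  induction w as [w IH] using (well_founded_ind wf).
  destruct (classic (exists b, lt b w)) as [pos|min].
  - apply (lower_invariant_eqv (tauIter_pos pos)), tau_lower_invariant.
    apply lower_invariant_union; assumption.
  - apply (lower_invariant_eqv (tauIter0 (no_lt_of_not_pos min))), lowF.
Qed.

Lemma tauLt_lower_invariant w : (exists b, lt b w) -> lower_invariant (tL w).
Proof.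
  intro pos. apply lower_invariant_union; [exact pos|].
  intros b _. apply tauIter_lower_invariant.
Qed.

Lemma tauIter_of_tau b w A : lt b w -> tau (tI b) A -> tI w A.
Proof.
  intros hb T. apply (tauIter_pos (ex_intro _ b hb)).
  apply (tau_mono (P := tI b)); [|exact T]. intros B HB. exists b. split; assumption.
Qed.

Lemma tauIter_mono b w A : lt b w -> tI b A -> tI w A.
Proof.
  intros hb HA. apply (tauIter_of_tau hb).
  destruct (tauIter_lower_invariant b) as [d [l _]]. apply tau_incr; assumption.
Qed.

Lemma tauIter_invariant (f : G -> G) (H K : gset G) w : subgroup H -> subgroup_iso f H K ->
  invariant_under F f H -> invariant_under (tI w) f H.
Proof.
  intros sH iso invF. induction w as [w IH] using (well_founded_ind wf).
  intros A AH. destruct (classic (exists b, lt b w)) as [pos|min].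
  - rewrite !(tauIter_pos pos).
    apply (tau_invariant sH iso (tauLt_lower_invariant pos)); [|exact AH].
    clear A AH. intros A AH. split; intros [b [hb Hb]]; exists b; split; try exact hb.
    + apply (IH b hb A AH), Hb.
    + apply (IH b hb A AH), Hb.
  - rewrite !(tauIter0 (no_lt_of_not_pos min)). apply invF, AH.
Qed.

Section TauDouble.
Variables (K : gset G) (z : G).
Hypotheses (sK : subgroup K) (zK : forall k, K k -> gmul z k = gmul k z) (zzK : ~ K (gmul z z)).
Hypothesis unionF : forall A B, F A -> F B -> F (union A B).

(* With [D = C ∪ zC]: for [u ∈ K], [D ∩ uD] lies in the double of [C ∩ uC], which is
   one stage lower; for other [u] it lies in [C] or in [zC]. *)
Lemma tau_double w C : subset C K -> tI w C -> tau (tI w) (union C (ltrans z C)).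
Proof.
  revert C. induction w as [w IH] using (well_founded_ind wf). intros C CK Cw.
  destruct (tauIter_lower_invariant w) as [dW [lW _]].
  apply tauE; [assumption..|]. intros u u1.
  destruct (classic (K u)) as [Ku|nKu]; [|destruct (classic (K (gmul u z))) as [Kuz|nKuz]].
  - refine (dW _ _ _ (double_inter_sub_of_K sK zK zzK CK Ku)).
    assert (CuK : subset (inter C (ltrans u C)) K) by (intros g [Cg _]; apply CK, Cg).
    destruct (classic (exists b, lt b w)) as [pos|min].
    + rewrite (tauIter_pos pos) in Cw. rewrite tauE in Cw by apply (tauLt_lower_invariant pos).
      destruct (Cw u u1) as [b [hb Hb]]. exact (tauIter_of_tau hb (IH b hb _ CuK Hb)).
    + destruct lowF as [dF [lF _]]. rewrite (tauIter0 (no_lt_of_not_pos min)) in Cw |- *.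
      assert (FCu : F (inter C (ltrans u C))) by (apply (dF C); [exact Cw|intros g [Cg _]; exact Cg]).
      apply unionF, lF; exact FCu.
  - exact (dW _ _ Cw (double_inter_sub_of_K_mulz sK zK zzK CK Kuz)).
  - exact (dW _ _ (lW _ z Cw) (double_inter_sub_of_notK sK zK CK nKu nKuz)).
Qed.

End TauDouble.

Section FiniteSets.
Variable H : gset G.
Hypotheses (sH : subgroup H) (tH : torsion_free H).

(* For [v ≠ 1] in the torsion-free [H], some point [q] of a finite [E] has
   [v^-1 q ∉ E], so [E ∩ vE] omits [q]; this loses one point per stage. *)
Lemma tauIter_at_most n : forall w E, has_depth lt n w -> subset E H -> at_most n E -> tI w E.
Proof.
  induction n as [|n IH]; intros w E depth EH [l [len El]].
  - destruct l; [|simpl in len; lia]. destruct (tauIter_lower_invariant w) as [dW [_ eW]].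
    apply (dW _ _ eW). intros g Eg. exact (El g Eg).
  - destruct depth as [b [hb depth]]. apply (tauIter_of_tau hb).
    destruct (tauIter_lower_invariant b) as [dB [lB _]].
    apply tauE; [assumption..|]. intros v v1.
    apply (IH b _ depth); [intros g [Eg _]; apply EH, Eg|].
    destruct (classic (H v)) as [Hv|nHv].
    2: { exists nil. split; [simpl; lia|]. intros g [Eg Evg]. exfalso. apply nHv.
         apply (subgroup_of_ldiv sH (g := g)); apply EH; assumption. }
    destruct (classic (exists q, In q l /\ ~ In (gmul (ginv v) q) l)) as [[q [lq nlq]]|stable].
    + set (dec := fun a b : G => excluded_middle_informative (a = b)).
      exists (remove dec q l). split; [pose proof (remove_length_lt dec l q lq); lia|].
      intros g [Eg Evg]. apply in_in_remove; [|exact (El g Eg)].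
      intros ->. apply nlq, El, Evg.
    + assert (l = nil) as ->.
      { apply (torsion_free_no_stable_list tH (subgroupV sH Hv)).
        - intro E1. apply v1, ginv_eq1, E1.
        - intros q lq. apply NNPP. intro nlq. apply stable. exists q. split; assumption. }
      exists nil. split; [simpl; lia|]. intros g [Eg _]. exact (El g Eg).
Qed.

End FiniteSets.

Section Witnesses.
Variables (H K : gset G) (h : G -> G) (z : G).
Variables (Kap : Type) (Hs : Kap -> gset G) (hs : Kap -> G -> G) (fW : W -> Kap).
Hypotheses (sH : subgroup H) (tH : torsion_free H).
Hypotheses (sK : subgroup K) (KH : subset K H) (iso : subgroup_iso h H K) (invh : invariant_under F h H).
Hypotheses (Hz : H z) (zK : forall k, K k -> gmul z k = gmul k z) (zzK : ~ K (gmul z z)).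
Hypothesis unionF : forall A B, F A -> F B -> F (union A B).
Hypotheses (sHs : forall n, subgroup (Hs n)) (HsH : forall n, subset (Hs n) H)
  (isoHs : forall n, subgroup_iso (hs n) H (Hs n)) (invHs : forall n, invariant_under F (hs n) H).
Hypothesis HsD : forall n m k l, n <> k -> n <> l -> m <> k -> m <> l ->
  forall g, prodset (Hs n) (Hs m) g -> prodset (Hs k) (Hs l) g -> g = gone G.
Hypothesis fW_inj : forall a b, fW a = fW b -> a = b.
Hypothesis sto : strict_total_order lt.

(* [C] witnesses [τ^w ≠ τ^{<w}]; [B] witnesses [τ^{w+1} ≠ τ^w].  Excluding [1] keeps
   the pieces [h_{f b}(B_b)] of a limit union off the identity shared by all [H_n]. *)
Definition stage_witness w C := subset C H /\ ~ C (gone G) /\ tI w C /\ ~ tL w C.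
Definition succ_witness w B := subset B H /\ ~ B (gone G) /\ tau (tI w) B /\ ~ tI w B.

Lemma succ_witness_double w C : (exists b, lt b w) -> stage_witness w C ->
  succ_witness w (union (image h C) (ltrans z (image h C))).
Proof.
  intros pos [CH [C1 [Cw Cnot]]].
  set (hC := image h C).
  assert (hCK : subset hC K) by (intros g [a [Ca <-]]; apply (iso_mem iso), CH, Ca).
  assert (hCw : tI w hC) by exact (proj1 (tauIter_invariant w sH iso invh CH) Cw).
  assert (hCnot : ~ tL w hC).
  { intros [b [hb Hb]]. apply Cnot. exists b. split; [exact hb|].
    exact (proj2 (tauIter_invariant b sH iso invh CH) Hb). }
  split; [|split; [|split]].
  - intros g [hCg|zhCg]; [exact (KH (hCK g hCg))|].
    rewrite <- (gmulKV z g). exact (subgroupM sH Hz (KH (hCK _ zhCg))).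
  - intros [[a [Ca ha1]]|zhC1].
    + apply C1. rewrite (iso_eq1 sH iso (CH a Ca) ha1) in Ca. exact Ca.
    + unfold ltrans in zhC1. rewrite gmul_1r in zhC1.
      exact (notK_z sK zzK (subgroupVr sK (hCK _ zhC1))).
  - exact (tau_double sK zK zzK unionF hCK hCw).
  - rewrite (tauIter_pos pos). intro T. apply hCnot.
    destruct (tauLt_lower_invariant pos) as [dL [lL _]].
    exact (tau_double_sub dL lL (z_neq1 sK zzK) T).
Qed.

Lemma stage_witness_of_pred v w B : lt v w -> (forall c, lt v c -> ~ lt c w) ->
  succ_witness v B -> stage_witness w B.
Proof.
  intros vw top [BH [B1 [TB nB]]]. destruct sto as [_ ltC].
  split; [exact BH|split; [exact B1|split; [exact (tauIter_of_tau vw TB)|]]].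
  intros [b [bw Hb]]. apply nB.
  destruct (ltC b v) as [bv|[<-|vb]].
  - exact (tauIter_mono bv Hb).
  - exact Hb.
  - exfalso. exact (top b vb bw).
Qed.

Definition limit_union (Bs : W -> gset G) w : gset G :=
  fun g => exists b, lt b w /\ image (hs (fW b)) (Bs b) g.

Section Limit.
Variables (Bs : W -> gset G) (w : W).
Hypothesis Bs_succ : forall b, lt b w -> succ_witness b (Bs b).
Let U := limit_union Bs w.

Lemma limit_union_mem g : U g ->
  exists b, lt b w /\ image (hs (fW b)) (Bs b) g /\ Hs (fW b) g /\ g <> gone G.
Proof.
  intros [b [bw [a [Ba <-]]]]. destruct (Bs_succ bw) as [BH [B1 _]].
  exists b. split; [exact bw|split; [exists a; split; [exact Ba|reflexivity]|split]].
  - exact (iso_mem (isoHs _) (BH a Ba)).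
  - intro E. apply B1. rewrite <- (iso_eq1 sH (isoHs _) (BH a Ba) E). exact Ba.
Qed.

(* For [u] in some [H_n] with [n = f b], disjointness of the products forces every
   point of [U ∩ uU] to come from the [b]-th piece. *)
Lemma limit_union_inter_of_Hs b u : lt b w -> u <> gone G -> Hs (fW b) u ->
  subset (inter U (ltrans u U))
    (inter (image (hs (fW b)) (Bs b)) (ltrans u (image (hs (fW b)) (Bs b)))).
Proof.
  intros bw u1 Hu g [Ug Uug].
  destruct (limit_union_mem Ug) as [i [_ [Ig [Hig g1]]]].
  destruct (limit_union_mem Uug) as [j [_ [Jg [Hjg ug1]]]].
  destruct (Hs_same_index sHs HsD u1 Hu Hig g1 Hjg ug1) as [ib jb].
  apply fW_inj in ib. apply fW_inj in jb. subst i j. split; assumption.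
Qed.

Lemma limit_union_inter_small u : u <> gone G -> (forall b, lt b w -> ~ Hs (fW b) u) ->
  at_most 3 (inter U (ltrans u U)).
Proof.
  intros u1 notHs. apply (labelled_at_most_three sHs HsD u1).
  intros g [Ug Uug].
  destruct (limit_union_mem Ug) as [i [iw [_ [Hig _]]]].
  destruct (limit_union_mem Uug) as [j [jw [_ [Hjg _]]]].
  exists (fW i), (fW j). split; [exact Hig|split; [exact Hjg|split; [apply notHs, iw|apply notHs, jw]]].
Qed.

Hypothesis pos : exists b, lt b w.
Hypothesis limit : forall b, lt b w -> exists c, lt b c /\ lt c w.

Lemma limit_union_in_tauIter : tI w U.
Proof.
  apply (tauIter_pos pos). destruct (tauLt_lower_invariant pos) as [dL [lL _]].
  apply tauE; [assumption..|]. intros u u1.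
  destruct (classic (exists b, lt b w /\ Hs (fW b) u)) as [[b [bw Hu]]|notHs].
  - destruct (iso_onto (isoHs (fW b)) Hu) as [v [Hv <-]].
    assert (v1 : v <> gone G) by (intros ->; apply u1, (iso1 sH (isoHs _))).
    destruct (Bs_succ bw) as [BH [_ [TB _]]].
    destruct (tauIter_lower_invariant b) as [dB [lB _]].
    rewrite tauE in TB by assumption.
    assert (BvH : subset (inter (Bs b) (ltrans v (Bs b))) H) by (intros g [Bg _]; exact (BH g Bg)).
    exists b. split; [exact bw|].
    refine (dB _ _ _ (limit_union_inter_of_Hs bw u1 Hu)).
    apply (dB _ _ (proj1 (tauIter_invariant b sH (isoHs (fW b)) (invHs (fW b)) BvH) (TB v v1))).
    intros g Hg. apply (iso_image_inter_ltrans sH (isoHs (fW b))); assumption.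
  - destruct (limit_has_depth 3 pos limit) as [c [cw depth]].
    exists c. split; [exact cw|]. apply (tauIter_at_most sH tH depth).
    + intros g [Ug _]. destruct (limit_union_mem Ug) as [i [_ [_ [Hig _]]]]. exact (HsH Hig).
    + apply limit_union_inter_small; [exact u1|].
      intros b bw Hu. apply notHs. exists b. split; assumption.
Qed.

Lemma stage_witness_limit : stage_witness w U.
Proof.
  split; [|split; [|split; [exact limit_union_in_tauIter|]]].
  - intros g Ug. destruct (limit_union_mem Ug) as [i [_ [_ [Hig _]]]]. exact (HsH Hig).
  - intro U1. destruct (limit_union_mem U1) as [i [_ [_ [_ g1]]]]. exact (g1 eq_refl).
  - intros [b [bw Hb]]. destruct (Bs_succ bw) as [BH [_ [_ nB]]]. apply nB.
    apply (tauIter_invariant b sH (isoHs (fW b)) (invHs (fW b)) BH).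
    destruct (tauIter_lower_invariant b) as [dB _]. apply (dB _ _ Hb).
    intros g Bg. exists b. split; assumption.
Qed.

End Limit.

Lemma stage_witness_exists w : (exists b, lt b w) ->
  (forall b, lt b w -> exists B, succ_witness b B) -> exists C, stage_witness w C.
Proof.
  intros pos IH.
  destruct (classic (exists v, lt v w /\ forall c, lt v c -> ~ lt c w)) as [[v [vw top]]|nopred].
  - destruct (IH v vw) as [B HB]. exists B. exact (stage_witness_of_pred vw top HB).
  - set (P b B := lt b w -> succ_witness b B).
    set (Bs b := epsilon (inhabits (@emptyset G)) (P b)).
    assert (Bs_succ : forall b, lt b w -> succ_witness b (Bs b)).
    { intros b bw. apply (epsilon_spec (inhabits (@emptyset G)) (P b)); [|exact bw].
      destruct (IH b bw) as [B HB]. exists B. intros _. exact HB. }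
    exists (limit_union Bs w). apply stage_witness_limit; [exact Bs_succ|exact pos|].
    intros b bw. apply NNPP. intro nc. apply nopred. exists b. split; [exact bw|].
    intros c bc cw. apply nc. exists c. split; assumption.
Qed.

Hypothesis base : exists A, subset A H /\ ~ A (gone G) /\ tau F A /\ ~ F A.

Lemma succ_witness_all w : exists B, succ_witness w B.
Proof.
  induction w as [w IH] using (well_founded_ind wf).
  destruct (classic (exists b, lt b w)) as [pos|min].
  - destruct (stage_witness_exists pos IH) as [C HC].
    exists (union (image h C) (ltrans z (image h C))). exact (succ_witness_double pos HC).
  - pose proof (tauIter0 (no_lt_of_not_pos min)) as E.
    destruct base as [A [AH [A1 [TA nA]]]]. exists A.
    split; [exact AH|split; [exact A1|split]].
    + apply (tau_eqv A E), TA.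
    + rewrite E. exact nA.
Qed.

Lemma tauIter_neq_tauLt w : ~ (forall A, tI w A <-> tL w A).
Proof.
  intro eq. destruct (classic (exists b, lt b w)) as [pos|min].
  - destruct (stage_witness_exists pos (fun b _ => succ_witness_all b)) as [C [_ [_ [Cw Cnot]]]].
    exact (Cnot (proj1 (eq C) Cw)).
  - destruct (tauIter_lower_invariant w) as [_ [_ eW]].
    destruct (proj1 (eq _) eW) as [b [bw _]]. exact (min (ex_intro _ b bw)).
Qed.

End Witnesses.

End Transfinite.

Theorem lemma6p7
  (G : Group) (F : family G) (H K : gset G) (h : G -> G) (z : G)
  (Kap : Type) (Hs : Kap -> gset G) (hs : Kap -> G -> G) :
  ideal F -> left_invariant F ->
  subgroup H -> subgroup K -> subset K H ->
  torsion_free H -> torsion_free K ->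
  subgroup_iso h H K -> invariant_under F h H ->
  H z -> (forall k, K k -> gmul z k = gmul k z) -> ~ K (gmul z z) ->
  (* kappa is an infinite cardinal, represented by the index type Kap *)
  (exists f : nat -> Kap, forall i j, f i = f j -> i = j) ->
  (forall n, subgroup (Hs n) /\ subset (Hs n) H /\
             subgroup_iso (hs n) H (Hs n) /\ invariant_under F (hs n) H) ->
  (forall n m k l, n <> k -> n <> l -> m <> k -> m <> l ->
     forall g, (prodset (Hs n) (Hs m) g /\ prodset (Hs k) (Hs l) g) <-> g = gone G) ->
  (exists A, tau F A /\ subset A H /\ ~ F A) ->
  (* every ordinal alpha < kappa^+ is the order type of the initial segment
     below some element w of a well-ordered set W of cardinality <= kappa *)
  forall (W : Type) (lt : W -> W -> Prop) (wf : well_founded lt),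
    strict_total_order lt ->
    (exists f : W -> Kap, forall a b, f a = f b -> a = b) ->
    forall w : W,
      ~ (forall A, tauIter F wf w A <-> tauLt F wf w A).
Proof.
  intros [dF unionF] lF sH sK KH tH _ iso invh Hz zK zzK _ HsP HsD [A [TA [AH nA]]]
    W lt wf sto [fW fW_inj] w.
  pose proof (z_neq1 sK zzK) as z1.
  assert (lowF : lower_invariant F).
  { split; [exact dF|split; [exact lF|]].
    apply (dF _ _ (TA _ _ (fun e => z1 (eq_sym e)))). intros g []. }
  assert (HsD' : forall n m k l, n <> k -> n <> l -> m <> k -> m <> l ->
     forall g, prodset (Hs n) (Hs m) g -> prodset (Hs k) (Hs l) g -> g = gone G).
  { intros n m k l nk nl mk ml g Pnm Pkl. apply (HsD n m k l nk nl mk ml g). split; assumption. }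
  exact (tauIter_neq_tauLt (wf := wf) lowF sH tH sK KH iso invh Hz zK zzK unionF
           (fun n => proj1 (HsP n)) (fun n => proj1 (proj2 (HsP n)))
           (fun n => proj1 (proj2 (proj2 (HsP n)))) (fun n => proj2 (proj2 (proj2 (HsP n))))
           HsD' fW_inj sto (tau_witness_avoiding_one lowF sH Hz z1 AH TA nA) (w := w)).
Qed.
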